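(* Let $n\ge1$ and let $\alpha=(a_n,\ldots,a_1)$ be a restricted sequence. In the expansion of $e'_\alpha$ as a $\mathbb{Q}(q)$-linear combination of the basis $\{e_\beta\}$ of $V_n$, the coefficient of $e_\alpha$ equals $1$.
   Context: $D_n$: non-crossing perfect matchings of $\{1,\ldots,2n\}$ (non-crossing $n$-chord diagrams), $D_0=\{\phi\}$. For $1\le k\le 2n+1$, $l_k:D_n\to D_{n+1}$: $l_k(\alpha)$ matches $k$ with $k+1$, old point $i$ becomes $i$ if $i<k$ and $i+2$ if $i\ge k$. Restricted sequence of $\alpha\in D_n$: let $k_n$ be the smallest $k$ with $k$ matched to $k+1$; it is $(k_n,k_{n-1},\ldots,k_1)$ with $(k_{n-1},\ldots,k_1)$ the restricted sequence of $\alpha$ with that arc removed (empty for $\phi$). This is a bijection from $D_n$ to restricted sequences of length $n$; $e_{(a_n,\ldots,a_1)}$ denotes the corresponding diagram. $V_n$: $\mathbb{Q}(q)$-vector space with basis $D_n$ ($q$ an indeterminate), $l_k$ extended linearly. $\Delta_{-1}=0$, $\Delta_0=1$, $\Delta_k=q\Delta_{k-1}-\Delta_{k-2}$. $e'$: $e'_{(1)}=e_{(1)}$; for $n\ge2$, $e'_{(a_n,\ldots,a_1)}=l_{a_n}(e'_{(a_{n-1},\ldots,a_1)})-\frac{\Delta_{a_n-2}}{\Delta_{a_n-1}}e'_{(a_n-1,a_{n-1},\ldots,a_1)}$ if $a_n\ge2$, and $e'_{(1,a_{n-1},\ldots,a_1)}=l_1(e'_{(a_{n-1},\ldots,a_1)})$.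 *)

From HB Require Import structures.
From mathcomp Require Import all_boot all_order all_algebra.
Set Implicit Arguments. Unset Strict Implicit. Unset Printing Implicit Defensive.
Import Order.TTheory GRing.Theory Num.Theory.

(* ---------- chord diagrams ----------
   A diagram on {1,..,2n} is encoded canonically as the sequence s of length 2n
   whose (i-1)-th entry is the partner of point i (points are 1-indexed). *)

Definition partner (s : seq nat) (i : nat) : nat := nth 0 s i.-1.

Definition is_ncd (n : nat) (s : seq nat) : bool :=
  [&& size s == 2 * n,
      all (fun i => [&& 1 <= partner s i <= 2 * n, partner s i != i
                      & partner s (partner s i) == i]) (iota 1 (2 * n))
    & all (fun a => all (fun b =>
            ~~ ((a < b) && (b < partner s a) && (partner s a < partner s b)))
          (iota 1 (2 * n))) (iota 1 (2 * n))].

(* l_k : D_n -> D_{n+1}: match k with k+1, old point i goes to i if i<k, i+2 if i>=k *)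
Definition shiftk (k i : nat) : nat := if i < k then i else i.+2.

Definition lk (k : nat) (s : seq nat) : seq nat :=
  mkseq (fun j => let p := j.+1 in
           if p == k then k.+1 else if p == k.+1 then k
           else shiftk k (partner s (if p < k then p else p - 2)))
        (size s).+2.

(* removal of the arc (k,k+1) (inverse of lk k) *)
Definition unshiftk (k i : nat) : nat := if i < k then i else i - 2.

Definition removek (k : nat) (s : seq nat) : seq nat :=
  mkseq (fun j => let p := j.+1 in
           unshiftk k (partner s (if p < k then p else p.+2)))
        (size s - 2).

Definition first_short_arc (s : seq nat) : nat :=
  let l := iota 1 (size s) in
  nth 0 l (find (fun k => partner s k == k.+1) l).

(* restricted sequence (k_n, ..., k_1) of a diagram with n chords (head = k_n) *)
Fixpoint rseq (n : nat) (s : seq nat) : seq nat :=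
  match n with
  | 0 => [::]
  | n'.+1 => let k := first_short_arc s in k :: rseq n' (removek k s)
  end.

Definition is_restricted (n : nat) (alpha : seq nat) : Prop :=
  exists s, is_ncd n s /\ rseq n s = alpha.

Definition Qq := {fraction {poly rat}}.
Definition q : Qq := tofrac ('X : {poly rat}).

Local Open Scope ring_scope.

Fixpoint Delta_aux (k : nat) : Qq * Qq :=   (* (Delta_{k-1}, Delta_k) *)
  match k with
  | 0 => (0, 1)
  | k'.+1 => let: (a, b) := Delta_aux k' in (b, q * b - a)
  end.
Definition Delta (k : nat) : Qq := (Delta_aux k).2.

(* A vector of V_n: a finite formal Q(q)-linear combination of diagrams *)
Definition vec := seq (Qq * seq nat).

Definition vscale (c : Qq) (v : vec) : vec := [seq (c * t.1, t.2) | t <- v].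
Definition vadd (v w : vec) : vec := v ++ w.
Definition vsub (v w : vec) : vec := vadd v (vscale (-1) w).
Definition vlk (k : nat) (v : vec) : vec := [seq (t.1, lk k t.2) | t <- v].
Definition coef (v : vec) (d : seq nat) : Qq := \sum_(t <- v | t.2 == d) t.1.

(* e'_{(a, a_{n-1},...,a_1)} given v = e'_{(a_{n-1},...,a_1)} *)
Fixpoint eprime_head (v : vec) (a : nat) : vec :=
  match a with
  | 0 => [::]                       (* never used: restricted sequences have entries >= 1 *)
  | 1 => vlk 1 v
  | (b.+1) as a' =>
      match b with
      | 0 => vlk 1 v
      | b'.+1 => vsub (vlk a' v) (vscale (Delta b' / Delta b) (eprime_head v b))
      end
  end.

(* e'_alpha, alpha = (a_n, ..., a_1) given as the list [:: a_n; ...; a_1].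
   Convention e'_() = phi, so that e'_{(1)} = l_1(phi) = e_{(1)}. *)
Fixpoint eprime (alpha : seq nat) : vec :=
  match alpha with
  | [::] => [:: (1, [::])]
  | a :: t => eprime_head (eprime t) a
  end.

From mathcomp Require Import all_boot all_order all_algebra zify.
Set Implicit Arguments. Unset Strict Implicit. Unset Printing Implicit Defensive.

(* Let a be the first short arc of the diagram d, so that d = l_a(d') where d'
   has restricted sequence (a_{n-1}, ..., a_1). Unfolding the recursion in a,
   e'_alpha is l_a(e'_alpha') plus a combination of vectors l_j(w) with j < a.
   Every diagram occurring in l_j(w) has the short arc (j, j+1), which d does
   not have for j < a, so only l_a(e'_alpha') contributes to the coefficient of
   e_d; as l_a is injective on diagrams, that coefficient is the coefficient of
   e_d' in e'_alpha', which is 1 by induction. *)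

Lemma partner_mkseq f m p : 0 < p <= m -> partner (mkseq f m) p = f p.-1.
Proof. by move=> hp; rewrite /partner nth_mkseq //; lia. Qed.

Lemma partner_eq_seq s t : size s = size t ->
  (forall p, 0 < p <= size s -> partner s p = partner t p) -> s = t.
Proof.
move=> st eq_st; apply: (eq_from_nth (x0 := 0)) => // j lt_j.
by have := eq_st j.+1; rewrite /partner /=; apply; lia.
Qed.

Section ShortArcInsertion.
Variable k : nat.

Lemma shiftkK : cancel (shiftk k) (unshiftk k).
Proof. by move=> i; rewrite /unshiftk /shiftk; case: (ltnP i k) => ?; case: ifP; lia. Qed.

Lemma unshiftkK i : i != k -> i != k.+1 -> shiftk k (unshiftk k i) = i.
Proof.
by move=> ? ?; rewrite /unshiftk /shiftk; case: (ltnP i k) => ?; case: ifP; lia.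
Qed.

Lemma ltn_shiftk a b : (shiftk k a < shiftk k b) = (a < b).
Proof. by rewrite /shiftk; case: ifP; case: ifP; lia. Qed.

Lemma shiftk_neq a : shiftk k a != k /\ shiftk k a != k.+1.
Proof. by rewrite /shiftk; case: ifP; lia. Qed.

Lemma size_lk s : size (lk k s) = (size s).+2.
Proof. exact: size_mkseq. Qed.

Lemma size_removek s : size (removek k s) = size s - 2.
Proof. exact: size_mkseq. Qed.

Lemma partner_lk_shiftk s p : 0 < p <= size s ->
  partner (lk k s) (shiftk k p) = shiftk k (partner s p).
Proof.
move=> hp; have [neq_k neq_k1] := shiftk_neq p.
rewrite partner_mkseq; last by rewrite /shiftk; case: ifP; lia.
rewrite prednK; last by rewrite /shiftk; case: ifP; lia.
rewrite /= -/(shiftk k p) (negbTE neq_k) (negbTE neq_k1); congr (shiftk k (partner s _)).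
by rewrite /shiftk; case: (ltnP p k) => h; rewrite ?h //; case: ifP; lia.
Qed.

Lemma partner_lk_arc s : 0 < k <= (size s).+2 -> partner (lk k s) k = k.+1.
Proof. by move=> hk; rewrite partner_mkseq //= prednK ?eqxx //; lia. Qed.

Lemma partner_lk_arc_succ s : k < (size s).+2 -> partner (lk k s) k.+1 = k.
Proof. by move=> hk; rewrite partner_mkseq //= (gtn_eqF (ltnSn k)) eqxx. Qed.

Lemma partner_removek s p : 0 < p <= size s - 2 ->
  partner (removek k s) p = unshiftk k (partner s (shiftk k p)).
Proof. by move=> hp; rewrite partner_mkseq // prednK //; lia. Qed.

Lemma lkK : cancel (lk k) (removek k).
Proof.
move=> s; apply: partner_eq_seq => [|p]; rewrite size_removek size_lk; first lia.
move=> hp; rewrite partner_removek ?size_lk; last lia.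
by rewrite partner_lk_shiftk ?shiftkK //; lia.
Qed.

Lemma lk_inj : injective (lk k).
Proof. exact: can_inj lkK. Qed.

End ShortArcInsertion.

Definition ncd n s : Prop := [/\ size s = 2 * n,
  forall i, 0 < i <= 2 * n ->
    [/\ 0 < partner s i <= 2 * n, partner s i != i & partner s (partner s i) = i]
  & forall a b, 0 < a <= 2 * n -> 0 < b <= 2 * n ->
    ~~ [&& a < b, b < partner s a & partner s a < partner s b]].

Lemma is_ncd_ncd n s : is_ncd n s -> ncd n s.
Proof.
case/and3P => /eqP size_s /allP matching /allP noncrossing; split => //.
  move=> i hi; have /matching/and3P[-> -> /eqP //] : i \in iota 1 (2 * n).
  by rewrite mem_iota; lia.
move=> a b ha hb; have /noncrossing/allP/(_ b) : a \in iota 1 (2 * n).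
  by rewrite mem_iota; lia.
by rewrite mem_iota andbA; apply; lia.
Qed.

(* The smallest point m matched to an earlier point is the right end of a short
   arc: otherwise m.-1 would open an arc enclosing m and crossing (partner m, m). *)
Lemma ncd_short_arc n s : ncd n.+1 s -> exists2 k, 0 < k & partner s k = k.+1.
Proof.
case=> _ matching noncrossing.
have closer_ex : exists m, (0 < m <= 2 * n.+1) && (partner s m < m).
  exists (2 * n.+1); have [|/andP[_ ?] ? _] := matching (2 * n.+1); first lia.
  by apply/andP; split; lia.
have [m /andP[hm closer_m] min_m] := ex_minnP closer_ex.
have [/andP[j_gt0 _] _ jK] := matching m hm.
set j := partner s m in j_gt0 closer_m jK.
have [|/andP[_ _] neq_m1 m1K] := matching m.-1; first lia.
have opener_m1 : m.-1 < partner s m.-1.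
  rewrite ltn_neqAle eq_sym neq_m1 leqNgt /=; apply/negP => closer_m1.
  suff /min_m : (0 < m.-1 <= 2 * n.+1) && (partner s m.-1 < m.-1) by lia.
  by rewrite closer_m1 andbT; lia.
exists m.-1; first lia.
apply/eqP; rewrite eqn_leq opener_m1 andbT prednK; last lia.
rewrite leqNgt; apply/negP => m_lt.
have lt_j : j < m.-1.
  suff : j != m.-1 by lia.
  by apply: contraTneq m_lt => eq_j; rewrite -eq_j jK ltnn.
have j_range : 0 < j <= 2 * n.+1 by lia.
have m1_range : 0 < m.-1 <= 2 * n.+1 by lia.
case/negP: (noncrossing j m.-1 j_range m1_range).
by rewrite jK lt_j m_lt /=; lia.
Qed.

Lemma partner_gt_size s p : size s < p -> partner s p = 0.
Proof. by move=> hp; rewrite /partner nth_default //; lia. Qed.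

Lemma short_arc_le_size s k : partner s k = k.+1 -> k <= size s.
Proof.
by move=> arc_k; rewrite leqNgt; apply/negP => /partner_gt_size; rewrite arc_k.
Qed.

Lemma first_short_arcP s k : 0 < k -> partner s k = k.+1 ->
  [/\ 0 < first_short_arc s <= size s,
      partner s (first_short_arc s) = (first_short_arc s).+1
    & forall j, 0 < j < first_short_arc s -> partner s j != j.+1].
Proof.
move=> k_gt0 arc_k; have k_le := short_arc_le_size arc_k.
pose is_arc i := partner s i == i.+1.
have has_arc : has is_arc (iota 1 (size s)).
  by apply/hasP; exists k; rewrite ?mem_iota /is_arc ?arc_k //; lia.
have find_lt : find is_arc (iota 1 (size s)) < size s.
  by rewrite -[X in _ < X](size_iota 1) -has_find.
have -> : first_short_arc s = (find is_arc (iota 1 (size s))).+1.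
  by rewrite /first_short_arc nth_iota // add1n.
split; first lia.
  by apply/eqP; have := nth_find 0 has_arc; rewrite nth_iota.
move=> j hj; have /(before_find 0) : j.-1 < find is_arc (iota 1 (size s)) by lia.
by rewrite nth_iota ?add1n ?prednK; [move/negbT | lia..].
Qed.

Section ShortArcRemoval.
Variables (n k : nat) (s : seq nat).
Hypotheses (s_ncd : ncd n.+1 s) (k_gt0 : 0 < k) (arc_k : partner s k = k.+1).

Let size_s : size s = 2 * n.+1. Proof. by case: s_ncd. Qed.

Let matching i : 0 < i <= 2 * n.+1 ->
  [/\ 0 < partner s i <= 2 * n.+1, partner s i != i & partner s (partner s i) = i].
Proof. by case: s_ncd => _ + _; apply. Qed.

Let k_lt : k < 2 * n.+1.
Proof.
have k_le : k <= 2 * n.+1 by rewrite -size_s short_arc_le_size.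
by have [|/andP[_]] := @matching k; rewrite ?arc_k; lia.
Qed.

Let arc_k1 : partner s k.+1 = k.
Proof. by have [|_ _] := @matching k; rewrite ?arc_k; lia. Qed.

Let shiftk_range a : 0 < a <= 2 * n -> 0 < shiftk k a <= 2 * n.+1.
Proof. by rewrite /shiftk; case: ifP; lia. Qed.

Let partner_shiftk_neq a : 0 < a <= 2 * n ->
  partner s (shiftk k a) != k /\ partner s (shiftk k a) != k.+1.
Proof.
move=> ha; have [neq_k neq_k1] := shiftk_neq k a.
have [_ _ K] := matching (shiftk_range ha).
split.
  by apply: contra_neq neq_k1 => eq_k; rewrite -K eq_k arc_k.
by apply: contra_neq neq_k => eq_k1; rewrite -K eq_k1 arc_k1.
Qed.

Lemma shiftk_partner_removek a : 0 < a <= 2 * n ->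
  shiftk k (partner (removek k s) a) = partner s (shiftk k a).
Proof.
move=> ha; have [neq_k neq_k1] := partner_shiftk_neq ha.
by rewrite partner_removek ?unshiftkK // size_s; lia.
Qed.

Let partner_removek_range a : 0 < a <= 2 * n -> 0 < partner (removek k s) a <= 2 * n.
Proof.
move=> ha; have [/andP[y_gt0 y_le] _ _] := matching (shiftk_range ha).
move: (shiftk_partner_removek ha) y_gt0 y_le; set y := partner s _.
by rewrite /shiftk; case: ifP; lia.
Qed.

Lemma removek_ncd : ncd n (removek k s).
Proof.
have shiftk_inj := can_inj (shiftkK k).
case: s_ncd => _ _ noncrossing; split.
- by rewrite size_removek size_s; lia.
- move=> i hi; have [_ neq_i K] := matching (shiftk_range hi).
  split; first exact: partner_removek_range.
    by apply: contra_neq neq_i => eq_i; rewrite -shiftk_partner_removek // eq_i.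
  apply: shiftk_inj.
  by rewrite !shiftk_partner_removek ?partner_removek_range.
move=> a b ha hb; apply: contraNN (noncrossing _ _ (shiftk_range ha) (shiftk_range hb)).
by rewrite -!shiftk_partner_removek ?partner_removek_range // !ltn_shiftk.
Qed.

Lemma removekK : lk k (removek k s) = s.
Proof.
have size_r : size (removek k s) = 2 * n by rewrite size_removek size_s; lia.
apply: partner_eq_seq; first by rewrite size_lk size_r size_s; lia.
rewrite size_lk size_r => p hp.
case: (eqVneq p k) => [->|neq_k]; first by rewrite partner_lk_arc ?size_r; lia.
case: (eqVneq p k.+1) => [->|neq_k1]; first by rewrite partner_lk_arc_succ ?size_r; lia.
have hu : 0 < unshiftk k p <= 2 * n by rewrite /unshiftk; case: ifP; lia.
rewrite -(unshiftkK neq_k neq_k1) partner_lk_shiftk ?size_r //.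
exact: shiftk_partner_removek.
Qed.

End ShortArcRemoval.

Import GRing.Theory.
Local Open Scope ring_scope.

Lemma coef_vscale c v d : coef (vscale c v) d = c * coef v d.
Proof. by rewrite /coef big_map mulr_sumr. Qed.

Lemma coef_cat v w d : coef (v ++ w) d = coef v d + coef w d.
Proof. exact: big_cat. Qed.

Lemma coef_vsub v w d : coef (vsub v w) d = coef v d - coef w d.
Proof. by rewrite /vsub /vadd coef_cat coef_vscale mulN1r. Qed.

Lemma coef_vlk_lk k v d : coef (vlk k v) (lk k d) = coef v d.
Proof.
by rewrite /coef big_map; apply: eq_bigl => t; rewrite /= (inj_eq (@lk_inj k)).
Qed.

Lemma coef_vlk_no_arc k v d : (0 < k <= size d)%N -> partner d k != k.+1 ->
  coef (vlk k v) d = 0.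
Proof.
move=> hk no_arc; rewrite /coef big_map big_pred0 // => t /=.
apply: contraNF no_arc => /eqP eq_d.
by rewrite -eq_d partner_lk_arc // -(size_lk k) eq_d.
Qed.

Lemma eprime_head_SS v b : eprime_head v b.+2 =
  vsub (vlk b.+2 v) (vscale (Delta b / Delta b.+1) (eprime_head v b.+1)).
Proof. by []. Qed.

Lemma coef_eprime_head_no_arc v b d : (b <= size d)%N ->
  (forall j, (0 < j <= b)%N -> partner d j != j.+1) -> coef (eprime_head v b) d = 0.
Proof.
elim: b => [|[|b] IHb] hb no_arc; first by rewrite /coef big_nil.
  by apply: (coef_vlk_no_arc (k := 1)) => //; apply: no_arc.
have no_arc_below j : (0 < j <= b.+1)%N -> partner d j != j.+1.
  by move=> hj; apply: no_arc; lia.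
rewrite eprime_head_SS coef_vsub coef_vscale IHb ?mulr0 ?subr0 //; last lia.
by rewrite coef_vlk_no_arc ?no_arc //; lia.
Qed.

Lemma coef_eprime_head_lk v a d : (0 < a <= (size d).+2)%N ->
  (forall j, (0 < j < a)%N -> partner (lk a d) j != j.+1) ->
  coef (eprime_head v a) (lk a d) = coef v d.
Proof.
case: a => [|[|b]] // hb no_arc; first exact: coef_vlk_lk.
rewrite eprime_head_SS coef_vsub coef_vlk_lk coef_vscale coef_eprime_head_no_arc.
- by rewrite mulr0 subr0.
- by rewrite size_lk; lia.
- by move=> j hj; apply: no_arc; lia.
Qed.

Lemma coef_eprime_rseq n s : ncd n s -> coef (eprime (rseq n s)) s = 1.
Proof.
elim: n s => [|n IHn] s s_ncd.
  case: s_ncd; rewrite muln0 => /size0nil -> _ _.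
  by rewrite /coef big_cons big_nil eqxx addr0.
have [k0 k0_gt0 arc_k0] := ncd_short_arc s_ncd.
have [/andP[k_gt0 k_le] arc_k first_k] := first_short_arcP k0_gt0 arc_k0.
set k := first_short_arc s in k_gt0 k_le arc_k first_k *.
have r_ncd := removek_ncd s_ncd k_gt0 arc_k.
have s_lk := removekK s_ncd k_gt0 arc_k.
rewrite /= -/k -[X in coef _ X]s_lk coef_eprime_head_lk ?IHn ?s_lk //.
by rewrite -(size_lk k) s_lk k_gt0.
Qed.

Theorem mainTheorem11 (n : nat) (alpha : seq nat) (s : seq nat) :
  (1 <= n)%N -> is_ncd n s -> rseq n s = alpha ->
  coef (eprime alpha) s = 1.
Proof. by move=> _ /is_ncd_ncd s_ncd <-; apply: coef_eprime_rseq. Qed.
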